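(* Let $f(z)=z+\sum_{n\ge2}a_nz^n$ belong to $\Omega$, let $k\in\{1,2,3,\dots\}$, and set $b_{k+1}=\frac1k a_2$ and $b_{2k+1}=\frac1k a_3-\frac12\frac{k-1}{k^2}a_2^2$ (these are the coefficients of $z^{k+1}$ and $z^{2k+1}$ in the $k$-th root transform $F_k(z)=(f(z^k))^{1/k}=z+\sum_{n\ge1}b_{kn+1}z^{kn+1}$). Then for every $\mu\in\mathbb{C}$, $$\left|b_{2k+1}-\mu b_{k+1}^2\right|\le \frac{1}{4k}\max\left\{1,\left|\frac{2\mu+k-1}{2k}\right|\right\},$$ and the inequality is sharp.
   Context: $\Delta=\{z\in\mathbb{C}:|z|<1\}$. $\mathcal{A}$ is the class of functions $f$ analytic in $\Delta$ with $f(0)=0$, $f'(0)=1$. $\Omega$ is the class of $f\in\mathcal{A}$ with $|zf'(z)-f(z)|<\tfrac12$ for all $z\in\Delta$. *)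

From Stdlib Require Import Reals.
Open Scope R_scope.

Record Cx : Type := mkC { Re : R; Im : R }.

Definition RtoC (r : R) : Cx := mkC r 0.
Definition Cadd (z w : Cx) : Cx := mkC (Re z + Re w) (Im z + Im w).
Definition Copp (z : Cx) : Cx := mkC (- Re z) (- Im z).
Definition Csub (z w : Cx) : Cx := Cadd z (Copp w).
Definition Cmul (z w : Cx) : Cx :=
  mkC (Re z * Re w - Im z * Im w) (Re z * Im w + Im z * Re w).
Definition Cinv (z : Cx) : Cx :=
  mkC (Re z / (Re z ^ 2 + Im z ^ 2)) (- Im z / (Re z ^ 2 + Im z ^ 2)).
Definition Cdiv (z w : Cx) : Cx := Cmul z (Cinv w).
Fixpoint Cpow (z : Cx) (n : nat) : Cx :=
  match n with O => RtoC 1 | S m => Cmul z (Cpow z m) end.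
Definition Cmod (z : Cx) : R := sqrt (Re z ^ 2 + Im z ^ 2).

Fixpoint Csum (u : nat -> Cx) (N : nat) : Cx :=
  match N with O => u O | S M => Cadd (Csum u M) (u (S M)) end.

Definition Cseries_to (u : nat -> Cx) (l : Cx) : Prop :=
  Un_cv (fun N => Re (Csum u N)) (Re l) /\ Un_cv (fun N => Im (Csum u N)) (Im l).

Definition C_deriv (f : Cx -> Cx) (z L : Cx) : Prop :=
  forall eps : R, eps > 0 -> exists delta : R, delta > 0 /\
    forall h : Cx, 0 < Cmod h < delta ->
      Cmod (Csub (Cdiv (Csub (f (Cadd z h)) (f z)) h) L) < eps.

Definition analytic_disk_with_coeffs (f : Cx -> Cx) (a : nat -> Cx) : Prop :=
  forall z : Cx, Cmod z < 1 -> Cseries_to (fun n => Cmul (a n) (Cpow z n)) (f z).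

(* Class A: analytic in Delta, f(0) = 0, f'(0) = 1 (a_0 = 0, a_1 = 1). *)
Definition in_A (f : Cx -> Cx) (a : nat -> Cx) : Prop :=
  analytic_disk_with_coeffs f a /\ a 0%nat = RtoC 0 /\ a 1%nat = RtoC 1.

Definition in_Omega (f : Cx -> Cx) (a : nat -> Cx) : Prop :=
  in_A f a /\
  forall z : Cx, Cmod z < 1 ->
    exists L : Cx, C_deriv f z L /\ Cmod (Csub (Cmul z L) (f z)) < 1 / 2.

Definition b_k1 (k : nat) (a : nat -> Cx) : Cx := Cmul (RtoC (1 / INR k)) (a 2%nat).
Definition b_2k1 (k : nat) (a : nat -> Cx) : Cx :=
  Csub (Cmul (RtoC (1 / INR k)) (a 3%nat))
       (Cmul (RtoC (1 / 2 * (INR k - 1) / (INR k ^ 2))) (Cmul (a 2%nat) (a 2%nat))).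

Definition FS (k : nat) (a : nat -> Cx) (mu : Cx) : Cx :=
  Csub (b_2k1 k a) (Cmul mu (Cmul (b_k1 k a) (b_k1 k a))).
Definition FS_bound (k : nat) (mu : Cx) : R :=
  1 / (4 * INR k) *
  Rmax 1 (Cmod (Cmul (RtoC (1 / (2 * INR k)))
                     (Cadd (Cmul (RtoC 2) mu) (RtoC (INR k - 1))))).

(* For f in Omega, p(z) = z f'(z) - f(z) = sum_{n >= 2} (n - 1) a_n z^n satisfies |p| < 1/2 on
   the disk. Bessel's inequality for (1 + beta z) p(z) on circles |z| = r, realised by sampling at
   the N-th roots of unity, gives |a_2|^2 + |2 a_3 + beta a_2|^2 <= (1 + |beta|^2) / 4 for every
   beta; the optimal beta turns this into |a_3| <= 1/4 - |a_2|^2. Since only the values of f' are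
   given, the Taylor polynomials of p are shown to approximate z f'(z) - f(z) uniformly on circles
   by Cauchy-type tail estimates.
   As b_{2k+1} - mu b_{k+1}^2 = (a_3 - t a_2^2) / k with t = (2 mu + k - 1) / (2 k), the bound
   follows from the triangle inequality, and z + z^3/4 (for |t| <= 1) and z + z^2/2 (for |t| >= 1)
   attain it. *)

From Stdlib Require Import Reals Lra Lia Psatz.
From Coquelicot Require Import Coquelicot.
From Pilot Require Defs.
Open Scope R_scope.

(** * Finite sums *)

Fixpoint sumR (f : nat -> R) (n : nat) : R :=
  match n with O => 0 | S m => sumR f m + f m end.
Fixpoint sumC (f : nat -> C) (n : nat) : C :=
  match n with O => 0%C | S m => (sumC f m + f m)%C end.

Lemma sumR_ext f g n : (forall i, (i < n)%nat -> f i = g i) -> sumR f n = sumR g n.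
Proof. induction n; intros H; simpl; auto. rewrite IHn, H; auto. Qed.
Lemma sumR_le f g n : (forall i, (i < n)%nat -> f i <= g i) -> sumR f n <= sumR g n.
Proof.
  induction n; intros H; simpl; [lra|].
  pose proof (H n ltac:(lia)). pose proof (IHn ltac:(auto)). lra.
Qed.
Lemma sumR_plus f g n : sumR (fun i => f i + g i) n = sumR f n + sumR g n.
Proof. induction n; simpl; [ring | rewrite IHn; ring]. Qed.
Lemma sumR_minus f g n : sumR (fun i => f i - g i) n = sumR f n - sumR g n.
Proof. induction n; simpl; [ring | rewrite IHn; ring]. Qed.
Lemma sumR_mult_l c f n : sumR (fun i => c * f i) n = c * sumR f n.
Proof. induction n; simpl; [ring | rewrite IHn; ring]. Qed.
Lemma sumR_mult_r c f n : sumR (fun i => f i * c) n = sumR f n * c.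
Proof. induction n; simpl; [ring | rewrite IHn; ring]. Qed.
Lemma sumR_const c n : sumR (fun _ => c) n = INR n * c.
Proof. induction n; simpl sumR; [simpl; ring | rewrite IHn, S_INR; ring]. Qed.
Lemma sumR_nonneg f n : (forall i, (i < n)%nat -> 0 <= f i) -> 0 <= sumR f n.
Proof. intros H. rewrite <- (Rmult_0_r (INR n)), <- sumR_const. apply sumR_le, H. Qed.

Lemma sumC_ext f g n : (forall i, (i < n)%nat -> f i = g i) -> sumC f n = sumC g n.
Proof. induction n; intros H; simpl; auto. rewrite IHn, H; auto. Qed.
Lemma sumC_plus f g n : sumC (fun i => f i + g i)%C n = (sumC f n + sumC g n)%C.
Proof. induction n; simpl; [ring | rewrite IHn; ring]. Qed.
Lemma sumC_minus f g n : sumC (fun i => f i - g i)%C n = (sumC f n - sumC g n)%C.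
Proof. induction n; simpl; [ring | rewrite IHn; ring]. Qed.
Lemma sumC_mult_l c f n : sumC (fun i => c * f i)%C n = (c * sumC f n)%C.
Proof. induction n; simpl; [ring | rewrite IHn; ring]. Qed.
Lemma sumC_mult_r c f n : sumC (fun i => f i * c)%C n = (sumC f n * c)%C.
Proof. induction n; simpl; [ring | rewrite IHn; ring]. Qed.
Lemma sumC_const (c : C) n : sumC (fun _ => c) n = (RtoC (INR n) * c)%C.
Proof. induction n; simpl sumC; [simpl; ring | rewrite IHn, S_INR, RtoC_plus; ring]. Qed.
Lemma fst_sumC f n : fst (sumC f n) = sumR (fun i => fst (f i)) n.
Proof. induction n; simpl; auto. rewrite <- IHn. reflexivity. Qed.
Lemma sumC_swap (f : nat -> nat -> C) n m :
  sumC (fun i => sumC (f i) m) n = sumC (fun j => sumC (fun i => f i j) n) m.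
Proof.
  induction n; simpl.
  - rewrite sumC_const. simpl. ring.
  - rewrite IHn, <- sumC_plus. reflexivity.
Qed.
Lemma Cmod_sumC_le f n : Cmod (sumC f n) <= sumR (fun i => Cmod (f i)) n.
Proof.
  induction n; simpl; [rewrite Cmod_0; lra|].
  eapply Rle_trans; [apply Cmod_triangle | lra].
Qed.
Lemma sumC_split f K m : sumC f (K + m) = (sumC f K + sumC (fun i => f (K + i)%nat) m)%C.
Proof.
  induction m; simpl; [rewrite Nat.add_0_r; ring|].
  rewrite Nat.add_succ_r. simpl. rewrite IHm. ring.
Qed.
Lemma sumC_single (f : nat -> C) n m : (m < n)%nat ->
  (forall i, (i < n)%nat -> i <> m -> f i = 0%C) -> sumC f n = f m.
Proof.
  intros Hm H. rewrite (sumC_ext f (fun i => if Nat.eq_dec i m then f m else 0%C)).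
  2: { intros i Hi. destruct (Nat.eq_dec i m) as [->|]; auto. }
  clear H. induction n; [lia|]. simpl.
  destruct (Nat.eq_dec n m) as [->|Hne].
  - rewrite (sumC_ext _ (fun _ => 0%C)), sumC_const; [ring|].
    intros i Hi. destruct (Nat.eq_dec i m); [lia | auto].
  - rewrite IHn by lia. ring.
Qed.

Lemma Un_cv_le_eventually u l K B : Un_cv u l -> (forall n, (K <= n)%nat -> u n <= B) -> l <= B.
Proof.
  intros Hu Hb. apply (Rle_cv_lim (Un := fun n => u (n + K)%nat) (Vn := fun _ => B)).
  - intros n. apply Hb. lia.
  - now apply CV_shift'.
  - intros e He. exists O. intros. unfold R_dist. rewrite Rminus_diag, Rabs_R0. auto.
Qed.

Lemma Cmod_lim_le (S : nat -> C) l c K B :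
  Un_cv (fun n => fst (S n)) (fst l) -> Un_cv (fun n => snd (S n)) (snd l) ->
  (forall n, (K <= n)%nat -> Cmod (S n - c)%C <= B) -> Cmod (l - c)%C <= B.
Proof.
  intros H1 H2 Hb.
  assert (HB : 0 <= B) by (eapply Rle_trans; [apply Cmod_ge_0 | apply (Hb K); lia]).
  assert (Hconst : forall x, Un_cv (fun _ => x) x).
  { intros x e He. exists O. intros. unfold R_dist. rewrite Rminus_diag, Rabs_R0. auto. }
  set (sq := fun x y : R => (x - fst c) * (x - fst c) + (y - snd c) * (y - snd c)).
  assert (Hsq : Un_cv (fun n => sq (fst (S n)) (snd (S n))) (sq (fst l) (snd l))).
  { unfold sq. apply CV_plus; apply CV_mult; apply CV_minus; auto. }
  assert (Hmod : forall z : C, Cmod (z - c)%C ^ 2 = sq (fst z) (snd z)).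
  { intros z. rewrite Cmod2_alt. unfold sq, Re, Im. simpl. ring. }
  assert (Hl : sq (fst l) (snd l) <= B ^ 2).
  { apply (Un_cv_le_eventually _ _ K _ Hsq). intros n Hn.
    rewrite <- Hmod. pose proof (Cmod_ge_0 (S n - c)%C). pose proof (Hb n Hn).
    apply pow_incr. lra. }
  rewrite <- Hmod in Hl. pose proof (Cmod_ge_0 (l - c)%C). nra.
Qed.

Lemma INR_mul_pow_le x n : 0 <= x < 1 -> INR n * x ^ n <= 1 / (1 - x).
Proof.
  intros Hx.
  assert (Hsum : forall n, INR n * x ^ n <= sumR (pow x) n).
  { intros m. induction m; [simpl; lra|]. simpl sumR. rewrite S_INR. simpl pow.
    pose proof (pow_le x m ltac:(lra)). pose proof (pos_INR m).
    assert (x * x ^ m <= x ^ m) by nra. nra. }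
  assert (Hgeom : sumR (pow x) n * (1 - x) = 1 - x ^ n).
  { induction n; simpl; [ring|]. rewrite Rmult_plus_distr_r, IHn. ring. }
  eapply Rle_trans; [apply Hsum|]. pose proof (pow_le x n ltac:(lra)).
  apply (Rmult_le_reg_r (1 - x)); [lra|]. rewrite Hgeom. unfold Rdiv. rewrite Rmult_assoc, Rinv_l; lra.
Qed.

Lemma sumR_pow_tail_le s K m : 0 <= s < 1 -> sumR (fun i => s ^ (K + i)) m <= s ^ K / (1 - s).
Proof.
  intros Hs.
  assert (Hgeom : sumR (fun i => s ^ (K + i)) m * (1 - s) = s ^ K - s ^ (K + m)).
  { induction m; simpl; [rewrite Nat.add_0_r; ring|].
    rewrite Rmult_plus_distr_r, IHm, Nat.add_succ_r. simpl. ring. }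
  pose proof (pow_le s (K + m) ltac:(lra)).
  apply (Rmult_le_reg_r (1 - s)); [lra|]. rewrite Hgeom. unfold Rdiv. rewrite Rmult_assoc, Rinv_l; lra.
Qed.

Lemma Cmod_le_abs_re_im z : Cmod z <= Rabs (fst z) + Rabs (snd z).
Proof.
  pose proof (Rabs_pos (fst z)); pose proof (Rabs_pos (snd z)).
  rewrite <- (sqrt_pow2 (Rabs (fst z) + Rabs (snd z))) by lra.
  apply sqrt_le_1_alt. rewrite <- (pow2_abs (fst z)), <- (pow2_abs (snd z)). nra.
Qed.

Lemma Cmod_RtoC_nonneg r : 0 <= r -> Cmod (RtoC r) = r.
Proof. intros; rewrite Cmod_R, Rabs_pos_eq; auto. Qed.

Lemma Cmod_pow_le w r n : Cmod w <= r -> Cmod (w ^ n)%C <= r ^ n.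
Proof. intros; rewrite Cmod_pow. apply pow_incr. split; auto. apply Cmod_ge_0. Qed.

(** * Power series on the unit disk *)

Definition has_taylor (g : C -> C) (b : nat -> C) : Prop :=
  forall w, Cmod w < 1 ->
    Un_cv (fun N => fst (sumC (fun n => b n * w ^ n)%C (S N))) (fst (g w)) /\
    Un_cv (fun N => snd (sumC (fun n => b n * w ^ n)%C (S N))) (snd (g w)).

Definition is_Cderiv (g : C -> C) (w L : C) : Prop :=
  forall eps, eps > 0 -> exists delta, delta > 0 /\
    forall h, 0 < Cmod h < delta -> Cmod ((g (w + h) - g w) / h - L)%C < eps.

Definition tpoly (b : nat -> C) K w := sumC (fun n => b n * w ^ n)%C (S K).
Definition tpoly_deriv (b : nat -> C) K w :=
  sumC (fun n => RtoC (INR n) * b n * w ^ (pred n))%C (S K).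
Definition tpoly_euler (b : nat -> C) K w :=
  sumC (fun n => RtoC (INR n - 1) * b n * w ^ n)%C (S K).

Lemma tpoly_euler_eq b K w : tpoly_euler b K w = (w * tpoly_deriv b K w - tpoly b K w)%C.
Proof.
  unfold tpoly_euler, tpoly_deriv, tpoly. rewrite <- sumC_mult_l, <- sumC_minus.
  apply sumC_ext. intros [|m] _; simpl Nat.pred; rewrite RtoC_minus; simpl; ring.
Qed.

Lemma taylor_coef_bound g b rho : has_taylor g b -> 0 <= rho < 1 ->
  exists B, forall n, Cmod (b n) * rho ^ n <= B.
Proof.
  intros Hg Hr. set (w := RtoC rho).
  destruct (Hg w) as [H1 H2]; [unfold w; rewrite Cmod_RtoC_nonneg; lra|].
  set (U := sumC (fun n => b n * w ^ n)%C) in *.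
  destruct (maj_by_pos _ (exist _ _ H1)) as [M1 [HM1 B1]].
  destruct (maj_by_pos _ (exist _ _ H2)) as [M2 [HM2 B2]].
  assert (B1' : forall n, Rabs (fst (U n)) <= M1).
  { intros [|n]; [simpl; rewrite Rabs_R0; lra | apply B1]. }
  assert (B2' : forall n, Rabs (snd (U n)) <= M2).
  { intros [|n]; [simpl; rewrite Rabs_R0; lra | apply B2]. }
  exists (2 * M1 + 2 * M2). intros n.
  replace (Cmod (b n) * rho ^ n) with (Cmod (U (S n) - U n)%C).
  2: { unfold U. simpl sumC. replace (_ + _ - _)%C with (b n * w ^ n)%C by ring.
       rewrite Cmod_mult, Cmod_pow. unfold w. rewrite Cmod_RtoC_nonneg; lra. }
  eapply Rle_trans; [apply Cmod_le_abs_re_im|].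
  replace (fst (U (S n) - U n)%C) with (fst (U (S n)) + - fst (U n)) by (simpl; ring).
  replace (snd (U (S n) - U n)%C) with (snd (U (S n)) + - snd (U n)) by (simpl; ring).
  pose proof (Rabs_triang (fst (U (S n))) (- fst (U n))).
  pose proof (Rabs_triang (snd (U (S n))) (- snd (U n))).
  rewrite !Rabs_Ropp in *.
  pose proof (B1' n); pose proof (B1' (S n)); pose proof (B2' n); pose proof (B2' (S n)). lra.
Qed.

Lemma taylor_coef_bound_INR g b rho : has_taylor g b -> 0 < rho < 1 ->
  exists C0, forall n, INR n * Cmod (b n) * rho ^ n <= C0.
Proof.
  intros Hg Hr. set (rho' := (1 + rho) / 2). set (x := rho / rho').
  destruct (taylor_coef_bound g b rho' Hg ltac:(unfold rho'; lra)) as [B HB].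
  assert (Hx : 0 <= x < 1).
  { unfold x, rho'. split; [apply Rle_mult_inv_pos; lra|].
    apply (Rmult_lt_reg_r ((1 + rho) / 2)); [lra|].
    unfold Rdiv at 1. rewrite Rmult_assoc, Rinv_l; lra. }
  assert (HB0 : 0 <= B).
  { eapply Rle_trans; [|apply (HB O)]. simpl. rewrite Rmult_1_r. apply Cmod_ge_0. }
  exists (1 / (1 - x) * B). intros n.
  assert (E : rho ^ n = x ^ n * rho' ^ n).
  { rewrite <- Rpow_mult_distr. unfold x. f_equal. field. unfold rho'; lra. }
  rewrite E. pose proof (INR_mul_pow_le x n Hx). pose proof (HB n).
  pose proof (Rmult_le_pos _ _ (pos_INR n) (pow_le x n ltac:(lra))).
  pose proof (Rmult_le_pos _ _ (Cmod_ge_0 (b n)) (pow_le rho' n ltac:(unfold rho'; lra))).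
  replace (INR n * Cmod (b n) * (x ^ n * rho' ^ n))
    with ((INR n * x ^ n) * (Cmod (b n) * rho' ^ n)) by ring.
  apply Rmult_le_compat; auto.
Qed.

Lemma Cmod_pow_sub_le w h rho n : 0 <= rho -> Cmod w <= rho -> Cmod (w + h)%C <= rho ->
  rho * Cmod ((w + h) ^ n - w ^ n)%C <= INR n * rho ^ n * Cmod h.
Proof.
  intros Hr Hw Hwh. induction n.
  - replace ((w + h) ^ 0 - w ^ 0)%C with (RtoC 0) by (simpl; ring). rewrite Cmod_0. simpl; lra.
  - replace ((w + h) ^ S n - w ^ S n)%C
      with ((w + h) * ((w + h) ^ n - w ^ n) + w ^ n * h)%C by (simpl; ring).
    eapply Rle_trans; [apply Rmult_le_compat_l; [auto | apply Cmod_triangle]|].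
    rewrite !Cmod_mult, S_INR. simpl pow.
    pose proof (Cmod_pow_le w rho n Hw). pose proof (Cmod_ge_0 h).
    pose proof (Cmod_ge_0 ((w + h) ^ n - w ^ n)%C). pose proof (Cmod_ge_0 (w + h)%C).
    pose proof (pos_INR n). pose proof (pow_le rho n Hr).
    assert (Cmod (w + h)%C * (rho * Cmod ((w + h) ^ n - w ^ n)%C) <= rho * (INR n * rho ^ n * Cmod h))
      by (apply Rmult_le_compat; auto; nra).
    assert (Cmod (w ^ n)%C * Cmod h <= rho ^ n * Cmod h) by nra.
    nra.
Qed.

Lemma Cmod_pow_sub_linear_le w h n : Cmod w <= 1 -> Cmod (w + h)%C <= 1 ->
  Cmod ((w + h) ^ n - w ^ n - RtoC (INR n) * w ^ (pred n) * h)%C <= INR n ^ 2 * Cmod h ^ 2.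
Proof.
  intros Hw Hwh. pose proof (Cmod_ge_0 h). induction n as [|n IHn].
  - replace ((w + h) ^ 0 - w ^ 0 - RtoC (INR 0) * w ^ pred 0 * h)%C with (RtoC 0) by (simpl; ring).
    rewrite Cmod_0. simpl; lra.
  - destruct n as [|n].
    + replace ((w + h) ^ 1 - w ^ 1 - RtoC (INR 1) * w ^ pred 1 * h)%C with (RtoC 0) by (simpl; ring).
      rewrite Cmod_0. simpl. nra.
    + set (E := ((w + h) ^ S n - w ^ S n - RtoC (INR (S n)) * w ^ pred (S n) * h)%C) in *.
      replace ((w + h) ^ S (S n) - w ^ S (S n) - RtoC (INR (S (S n))) * w ^ pred (S (S n)) * h)%C
        with ((w + h) * E + RtoC (INR (S n)) * w ^ n * h * h)%C.
      2: { unfold E. rewrite (S_INR (S n)), RtoC_plus. simpl Nat.pred. simpl Cpow. ring. }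
      eapply Rle_trans; [apply Cmod_triangle|].
      rewrite !Cmod_mult, Cmod_RtoC_nonneg by apply pos_INR.
      pose proof (Cmod_pow_le w 1 n Hw). rewrite pow1 in H0.
      pose proof (Cmod_ge_0 E). pose proof (Cmod_ge_0 (w + h)%C).
      pose proof (Cmod_ge_0 (w ^ n)%C). pose proof (pos_INR (S n)).
      rewrite (S_INR (S n)).
      assert (Cmod (w + h)%C * Cmod E <= INR (S n) ^ 2 * Cmod h ^ 2) by nra.
      assert (INR (S n) * Cmod (w ^ n)%C * Cmod h * Cmod h <= INR (S n) * Cmod h ^ 2).
      { replace (INR (S n) * Cmod (w ^ n)%C * Cmod h * Cmod h)
          with ((INR (S n) * Cmod h ^ 2) * Cmod (w ^ n)%C) by ring.
        rewrite <- (Rmult_1_r (INR (S n) * Cmod h ^ 2)) at 2.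
        apply Rmult_le_compat_l; [apply Rmult_le_pos, pow2_ge_0 | ]; auto. }
      nra.
Qed.

Lemma tpoly_taylor2_le b K w h : Cmod w <= 1 -> Cmod (w + h)%C <= 1 ->
  Cmod (tpoly b K (w + h) - tpoly b K w - tpoly_deriv b K w * h)%C
    <= sumR (fun n => Cmod (b n) * INR n ^ 2) (S K) * Cmod h ^ 2.
Proof.
  intros Hw Hwh. unfold tpoly, tpoly_deriv. rewrite <- sumC_mult_r, <- !sumC_minus.
  rewrite (sumC_ext _ (fun n => b n * ((w + h) ^ n - w ^ n - RtoC (INR n) * w ^ pred n * h))%C)
    by (intros; ring).
  eapply Rle_trans; [apply Cmod_sumC_le|]. rewrite <- sumR_mult_r. apply sumR_le. intros i _.
  rewrite Cmod_mult, Rmult_assoc. apply Rmult_le_compat_l; [apply Cmod_ge_0|].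
  apply Cmod_pow_sub_linear_le; auto.
Qed.

Lemma Cderiv_dist_le g w L D T CK delta0 :
  is_Cderiv g w L -> 0 < delta0 -> 0 <= CK ->
  (forall h, 0 < Cmod h < delta0 -> Cmod ((g (w + h) - g w) / h - D)%C <= T + CK * Cmod h) ->
  Cmod (L - D)%C <= T.
Proof.
  intros HL Hd0 HCK Hq.
  destruct (Rle_or_lt (Cmod (L - D)%C) T) as [|Hlt]; auto. exfalso.
  set (eta := Cmod (L - D)%C - T).
  destruct (HL (eta / 2) ltac:(unfold eta; lra)) as [delta [Hd Hdelta]].
  set (t := Rmin (Rmin (delta / 2) (delta0 / 2)) (eta / (4 * (CK + 1)))).
  assert (Ht0 : 0 < t).
  { unfold t. repeat apply Rmin_pos; try lra. apply Rdiv_lt_0_compat; unfold eta; lra. }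
  assert (Ht1 : t <= delta / 2) by (eapply Rle_trans; [apply Rmin_l | apply Rmin_l]).
  assert (Ht2 : t <= delta0 / 2) by (eapply Rle_trans; [apply Rmin_l | apply Rmin_r]).
  assert (Ht3 : CK * t <= eta / 4).
  { apply Rle_trans with (CK * (eta / (4 * (CK + 1)))); [apply Rmult_le_compat_l, Rmin_r; auto|].
    apply (Rmult_le_reg_r (4 * (CK + 1))); [lra|].
    replace (CK * (eta / (4 * (CK + 1))) * (4 * (CK + 1))) with (CK * eta) by (field; lra).
    unfold eta. nra. }
  set (h := RtoC t).
  assert (Hh : Cmod h = t) by (unfold h; apply Cmod_RtoC_nonneg; lra).
  specialize (Hdelta h ltac:(lra)). specialize (Hq h ltac:(lra)).
  set (Q := ((g (w + h) - g w) / h)%C) in *.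
  assert (Cmod (L - D)%C <= Cmod (Q - D)%C + Cmod (Q - L)%C).
  { replace (L - D)%C with ((Q - D) + - (Q - L))%C by ring.
    eapply Rle_trans; [apply Cmod_triangle | rewrite Cmod_opp; lra]. }
  rewrite Hh in Hq. unfold eta in *. lra.
Qed.

Section Taylor_tails.

Variables (g : C -> C) (b : nat -> C) (rho1 rhop C0 : R).
Hypothesis Hg : has_taylor g b.
Hypothesis Hrho : 0 < rhop < rho1.
Hypothesis Hrho1 : rho1 < 1.
Hypothesis HC0 : forall n, INR n * Cmod (b n) * rho1 ^ n <= C0.

Let s := rhop / rho1.

Let s_range : 0 <= s < 1.
Proof.
  unfold s. split; [apply Rle_mult_inv_pos; lra|].
  apply (Rmult_lt_reg_r rho1); [lra|]. unfold Rdiv. rewrite Rmult_assoc, Rinv_l; lra.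
Qed.

Let C0_nonneg : 0 <= C0.
Proof. specialize (HC0 O). simpl in HC0. lra. Qed.

Lemma coef_mul_pow_le n : INR n * Cmod (b n) * rhop ^ n <= C0 * s ^ n.
Proof.
  replace (INR n * Cmod (b n) * rhop ^ n) with ((INR n * Cmod (b n) * rho1 ^ n) * s ^ n).
  - apply Rmult_le_compat_r; [apply pow_le; apply s_range | apply HC0].
  - unfold s. rewrite Rmult_assoc, <- Rpow_mult_distr. f_equal. f_equal. field. lra.
Qed.

Lemma taylor_tail_le K w : Cmod w <= rhop ->
  Cmod (g w - tpoly b K w)%C <= C0 * (s ^ S K / (1 - s)).
Proof.
  intros Hw. destruct (Hg w ltac:(lra)) as [H1 H2].
  apply (Cmod_lim_le (fun N => sumC (fun n => b n * w ^ n)%C (S N))) with (K := K); auto.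
  intros N HN. unfold tpoly. replace (S N) with (S K + (N - K))%nat by lia.
  rewrite sumC_split.
  match goal with |- context [(?A + ?X - ?A)%C] => replace (A + X - A)%C with X by ring end.
  eapply Rle_trans; [apply Cmod_sumC_le|].
  eapply Rle_trans; [apply sumR_le with (g := fun i => C0 * s ^ (S K + i))|].
  - intros i _. eapply Rle_trans; [|apply coef_mul_pow_le].
    rewrite Cmod_mult. pose proof (Cmod_pow_le w rhop (S K + i) Hw).
    pose proof (Cmod_ge_0 (b (S K + i)%nat)).
    assert (1 <= INR (S K + i)) by (apply (le_INR 1); lia).
    pose proof (pow_le rhop (S K + i) ltac:(lra)).
    assert (Cmod (b (S K + i)%nat) * Cmod (w ^ (S K + i))%C
              <= Cmod (b (S K + i)%nat) * rhop ^ (S K + i)) by (apply Rmult_le_compat_l; auto).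
    assert (0 <= Cmod (b (S K + i)%nat) * rhop ^ (S K + i)) by (apply Rmult_le_pos; auto).
    nra.
  - rewrite sumR_mult_l. apply Rmult_le_compat_l; auto. apply sumR_pow_tail_le, s_range.
Qed.

Lemma taylor_tail_diff_le K w h : Cmod w <= rhop -> Cmod (w + h)%C <= rhop ->
  Cmod (g (w + h) - g w - (tpoly b K (w + h) - tpoly b K w))%C
    <= C0 / rhop * (s ^ S K / (1 - s)) * Cmod h.
Proof.
  intros Hw Hwh.
  destruct (Hg w ltac:(lra)) as [H1 H2]. destruct (Hg (w + h)%C ltac:(lra)) as [H3 H4].
  assert (Hsum : forall N, (sumC (fun n => b n * (w + h) ^ n) N - sumC (fun n => b n * w ^ n) N)%C
                           = sumC (fun n => b n * ((w + h) ^ n - w ^ n))%C N).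
  { intros N. rewrite <- sumC_minus. apply sumC_ext. intros; ring. }
  apply (Cmod_lim_le (fun N => sumC (fun n => b n * ((w + h) ^ n - w ^ n))%C (S N))) with (K := K).
  - eapply Un_cv_ext; [| apply (CV_minus _ _ _ _ H3 H1)]. intros n. simpl.
    rewrite <- Hsum. simpl. ring.
  - eapply Un_cv_ext; [| apply (CV_minus _ _ _ _ H4 H2)]. intros n. simpl.
    rewrite <- Hsum. simpl. ring.
  - intros N HN. unfold tpoly. rewrite Hsum.
    replace (S N) with (S K + (N - K))%nat by lia. rewrite sumC_split.
    match goal with |- context [(?A + ?X - ?A)%C] => replace (A + X - A)%C with X by ring end.
    eapply Rle_trans; [apply Cmod_sumC_le|].
    eapply Rle_trans; [apply sumR_le with (g := fun i => C0 / rhop * s ^ (S K + i) * Cmod h)|].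
    + intros i _. set (n := (S K + i)%nat).
      pose proof (coef_mul_pow_le n) as T.
      pose proof (Cmod_pow_sub_le w h rhop n ltac:(lra) Hw Hwh) as P.
      rewrite Cmod_mult.
      pose proof (Cmod_ge_0 (b n)). pose proof (Cmod_ge_0 h).
      apply (Rmult_le_reg_l rhop); [lra|].
      replace (rhop * (C0 / rhop * s ^ n * Cmod h)) with (C0 * s ^ n * Cmod h) by (field; lra).
      replace (rhop * (Cmod (b n) * Cmod ((w + h) ^ n - w ^ n)%C))
        with (Cmod (b n) * (rhop * Cmod ((w + h) ^ n - w ^ n)%C)) by ring.
      eapply Rle_trans; [apply Rmult_le_compat_l; [auto | apply P]|].
      replace (Cmod (b n) * (INR n * rhop ^ n * Cmod h))
        with ((INR n * Cmod (b n) * rhop ^ n) * Cmod h) by ring.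
      apply Rmult_le_compat_r; auto.
    + rewrite sumR_mult_r, sumR_mult_l. apply Rmult_le_compat_r; [apply Cmod_ge_0|].
      apply Rmult_le_compat_l; [apply Rle_mult_inv_pos; lra|]. apply sumR_pow_tail_le, s_range.
Qed.

Lemma Cderiv_tpoly_deriv_le K w L : Cmod w < rhop -> is_Cderiv g w L ->
  Cmod (L - tpoly_deriv b K w)%C <= C0 / rhop * (s ^ S K / (1 - s)).
Proof.
  intros Hw HL. set (T := C0 / rhop * (s ^ S K / (1 - s))).
  set (CK := sumR (fun n => Cmod (b n) * INR n ^ 2) (S K)).
  apply (Cderiv_dist_le g w L _ T CK (rhop - Cmod w)); auto; [lra| |].
  { apply sumR_nonneg. intros. apply Rmult_le_pos; [apply Cmod_ge_0 | apply pow2_ge_0]. }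
  intros h [Hh0 Hh].
  assert (Hwh : Cmod (w + h)%C <= rhop) by (eapply Rle_trans; [apply Cmod_triangle | lra]).
  assert (Hh' : h <> RtoC 0) by (intros E; rewrite E, Cmod_0 in Hh0; lra).
  replace ((g (w + h) - g w) / h - tpoly_deriv b K w)%C
    with ((g (w + h) - g w - (tpoly b K (w + h) - tpoly b K w)
          + (tpoly b K (w + h) - tpoly b K w - tpoly_deriv b K w * h)) / h)%C
    by (field; auto).
  rewrite Cmod_div by auto. apply (Rmult_le_reg_r (Cmod h)); [lra|].
  unfold Rdiv. rewrite Rmult_assoc, Rinv_l, Rmult_1_r by lra.
  eapply Rle_trans; [apply Cmod_triangle|].
  pose proof (taylor_tail_diff_le K w h ltac:(lra) Hwh).
  pose proof (tpoly_taylor2_le b K w h ltac:(lra) ltac:(lra)). fold CK in H0.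
  unfold T. nra.
Qed.

End Taylor_tails.

Lemma tpoly_euler_approx g b r eps : has_taylor g b -> 0 < r < 1 -> eps > 0 ->
  exists K, (3 <= K)%nat /\ forall w L, Cmod w = r -> is_Cderiv g w L ->
    Cmod (w * L - g w - tpoly_euler b K w)%C <= eps.
Proof.
  intros Hg Hr Heps.
  set (rho1 := (1 + r) / 2). set (rhop := (r + rho1) / 2).
  assert (Hrho1 : 0 < rho1 < 1) by (unfold rho1; lra).
  assert (Hrhop : 0 < rhop < rho1) by (unfold rhop, rho1; lra).
  destruct (taylor_coef_bound_INR g b rho1 Hg Hrho1) as [C0 HC].
  assert (HC0 : 0 <= C0) by (specialize (HC O); simpl in HC; lra).
  set (s := rhop / rho1).
  assert (Hs : 0 <= s < 1).
  { unfold s. split; [apply Rle_mult_inv_pos; lra|].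
    apply (Rmult_lt_reg_r rho1); [lra|]. unfold Rdiv; rewrite Rmult_assoc, Rinv_l; lra. }
  set (M := C0 / rhop / (1 - s)).
  assert (HM : 0 <= M) by (unfold M; repeat apply Rle_mult_inv_pos; lra).
  destruct (pow_lt_1_zero s ltac:(rewrite Rabs_pos_eq; lra) (eps / (2 * M + 1))
              ltac:(apply Rdiv_lt_0_compat; lra)) as [N HN].
  exists (max N 3). split; [lia|]. intros w L Hw HL. set (K := max N 3).
  specialize (HN (S K) ltac:(unfold K; lia)). rewrite Rabs_pos_eq in HN by (apply pow_le; lra).
  assert (HT : C0 / rhop * (s ^ S K / (1 - s)) = M * s ^ S K) by (unfold M; field; lra).
  pose proof (Cderiv_tpoly_deriv_le g b rho1 rhop C0 Hg Hrhop (proj2 Hrho1) HC K w L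
                ltac:(unfold rhop, rho1; lra) HL) as Hderiv.
  pose proof (taylor_tail_le g b rho1 rhop C0 Hg Hrhop (proj2 Hrho1) HC K w
                ltac:(unfold rhop, rho1; lra)) as Htail.
  fold s in Hderiv, Htail. rewrite HT in Hderiv.
  assert (Htail' : Cmod (g w - tpoly b K w)%C <= M * s ^ S K).
  { eapply Rle_trans; [apply Htail|]. rewrite <- HT.
    apply Rmult_le_compat_r; [apply Rle_mult_inv_pos; [apply pow_le|]; lra|].
    apply (Rmult_le_reg_r rhop); [lra|]. field_simplify; nra. }
  rewrite tpoly_euler_eq.
  replace (w * L - g w - (w * tpoly_deriv b K w - tpoly b K w))%C
    with (w * (L - tpoly_deriv b K w) + - (g w - tpoly b K w))%C by ring.
  eapply Rle_trans; [apply Cmod_triangle|]. rewrite Cmod_opp, Cmod_mult, Hw.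
  pose proof (Cmod_ge_0 (L - tpoly_deriv b K w)%C).
  assert (M * s ^ S K <= M * (eps / (2 * M + 1))) by (apply Rmult_le_compat_l; lra).
  assert (M * (eps / (2 * M + 1)) * 2 <= eps).
  { apply (Rmult_le_reg_r (2 * M + 1)); [lra|].
    replace (M * (eps / (2 * M + 1)) * 2 * (2 * M + 1)) with (2 * M * eps) by (field; lra). nra. }
  nra.
Qed.

(** * Sums over roots of unity *)

Definition cis (x : R) : C := (cos x, sin x).

Lemma cis_add x y : cis (x + y) = (cis x * cis y)%C.
Proof. unfold cis. apply injective_projections; simpl; rewrite ?cos_plus, ?sin_plus; ring. Qed.
Lemma cis_opp x : cis (- x) = Cconj (cis x).
Proof. unfold cis, Cconj. simpl. rewrite cos_neg, sin_neg. reflexivity. Qed.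
Lemma cis_0 : cis 0 = RtoC 1.
Proof. unfold cis. rewrite cos_0, sin_0. reflexivity. Qed.
Lemma Cmod_cis x : Cmod (cis x) = 1.
Proof.
  unfold Cmod, cis. simpl fst; simpl snd. rewrite <- sqrt_1. f_equal.
  pose proof (sin2_cos2 x). unfold Rsqr in H. lra.
Qed.
Lemma cis_pow x n : (cis x ^ n)%C = cis (INR n * x).
Proof.
  induction n; simpl Cpow; [rewrite Rmult_0_l, cis_0; reflexivity|].
  rewrite IHn, <- cis_add, S_INR. f_equal. ring.
Qed.
Lemma cis_mul_INR_2PI n : cis (INR n * (2 * PI)) = RtoC 1.
Proof.
  rewrite <- cis_pow. replace (cis (2 * PI)) with (RtoC 1).
  - induction n; simpl; [reflexivity | rewrite IHn; ring].
  - unfold cis. rewrite cos_2PI, sin_2PI. reflexivity.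
Qed.

Lemma cis_neq_1 x : 0 < Rabs x < 2 * PI -> cis x <> RtoC 1.
Proof.
  intros Hx E. apply (f_equal fst) in E as Ec. apply (f_equal snd) in E as Es.
  simpl in Ec, Es. unfold Rabs in Hx. destruct (Rcase_abs x).
  - rewrite <- cos_neg in Ec. rewrite <- (Ropp_involutive x), sin_neg in Es.
    destruct (sin_eq_O_2PI_0 (- x)) as [|[|]]; try lra; subst.
    rewrite H, cos_PI in Ec. lra.
  - destruct (sin_eq_O_2PI_0 x) as [|[|]]; try lra. rewrite H, cos_PI in Ec. lra.
Qed.

Lemma sumC_pow_mul (q : C) n : (sumC (fun j => q ^ j) n * (1 - q))%C = (1 - q ^ n)%C.
Proof. induction n; simpl; [ring|]. rewrite Cmult_plus_distr_r, IHn. ring. Qed.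

Definition root_angle (N j : nat) : R := 2 * PI * INR j / INR N.

Lemma sumC_cis_root_angle N n m : (n < N)%nat -> (m < N)%nat ->
  sumC (fun j => cis ((INR n - INR m) * root_angle N j)) N
    = if Nat.eq_dec n m then RtoC (INR N) else RtoC 0.
Proof.
  intros Hn Hm. assert (HN : 0 < INR N) by (apply lt_0_INR; lia).
  set (x := (INR n - INR m) * (2 * PI) / INR N).
  rewrite (sumC_ext _ (fun j => cis x ^ j)%C).
  2: { intros j _. rewrite cis_pow. f_equal. unfold x, root_angle. field. lra. }
  destruct (Nat.eq_dec n m) as [<-|Hnm].
  - rewrite (sumC_ext _ (fun _ => RtoC 1)), sumC_const; [ring|].
    intros j _. unfold x. rewrite Rminus_diag, !Rmult_0_l, Rdiv_0_l, cis_0. apply Cpow_1_l.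
  - assert (Hq : cis x <> RtoC 1).
    { apply cis_neq_1. pose proof PI_RGT_0.
      assert (0 < Rabs (INR n - INR m) < INR N).
      { split; [apply Rabs_pos_lt; intros E; apply Hnm, INR_eq; lra|].
        apply Rabs_def1; pose proof (lt_INR _ _ Hn); pose proof (lt_INR _ _ Hm);
          pose proof (pos_INR n); pose proof (pos_INR m); lra. }
      unfold x. rewrite Rabs_div, (Rabs_pos_eq (INR N)), Rabs_mult, (Rabs_pos_eq (2 * PI)) by lra.
      split; [apply Rdiv_lt_0_compat; nra|].
      apply (Rmult_lt_reg_r (INR N)); auto. field_simplify; nra. }
    assert (HqN : (cis x ^ N)%C = RtoC 1).
    { rewrite cis_pow. unfold x. replace (INR N * ((INR n - INR m) * (2 * PI) / INR N))
        with (INR n * (2 * PI) + - (INR m * (2 * PI))) by (field; lra).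
      rewrite cis_add, cis_opp, !cis_mul_INR_2PI. apply injective_projections; simpl; ring. }
    assert (Hq' : (RtoC 1 - cis x)%C <> RtoC 0).
    { intros E. apply Hq. replace (cis x) with (RtoC 1 - (RtoC 1 - cis x))%C by ring.
      rewrite E. ring. }
    pose proof (sumC_pow_mul (cis x) N) as G. rewrite HqN in G.
    replace (sumC (fun j => cis x ^ j) N)%C
      with (sumC (fun j => cis x ^ j) N * (RtoC 1 - cis x) / (RtoC 1 - cis x))%C by (field; auto).
    rewrite G. field. auto.
Qed.

Definition sample_poly (N : nat) (u : nat -> C) K j :=
  sumC (fun n => u n * cis (INR n * root_angle N j))%C (S K).

Lemma sample_poly_coef N K u m : (K < N)%nat -> (m <= K)%nat ->
  sumC (fun j => sample_poly N u K j * cis (- (INR m * root_angle N j)))%C N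
    = (RtoC (INR N) * u m)%C.
Proof.
  intros HK Hm. unfold sample_poly.
  rewrite (sumC_ext _ (fun j => sumC (fun n => u n * cis ((INR n - INR m) * root_angle N j)) (S K))%C).
  2: { intros j _. rewrite <- sumC_mult_r. apply sumC_ext. intros n _.
       rewrite <- Cmult_assoc, <- cis_add. do 2 f_equal. ring. }
  rewrite sumC_swap.
  rewrite (sumC_ext _ (fun n => u n * if Nat.eq_dec n m then RtoC (INR N) else RtoC 0))%C.
  2: { intros n Hn. rewrite sumC_mult_l, sumC_cis_root_angle by lia. reflexivity. }
  rewrite (sumC_single _ (S K) m) by (lia || (intros i _ Hi; destruct (Nat.eq_dec i m); [lia | ring])).
  destruct (Nat.eq_dec m m); [ring | lia].
Qed.

Definition dot (x y : C) : R := fst (x * Cconj y)%C.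
Definition sqnorm (z : C) : R := dot z z.

Lemma sqnorm_Cmod z : sqnorm z = Cmod z ^ 2.
Proof. rewrite Cmod2_alt. unfold sqnorm, dot, Re, Im. simpl. ring. Qed.
Lemma sqnorm_nonneg z : 0 <= sqnorm z.
Proof. rewrite sqnorm_Cmod. apply pow2_ge_0. Qed.
Lemma sqnorm_mult x y : sqnorm (x * y)%C = sqnorm x * sqnorm y.
Proof. destruct x, y; unfold sqnorm, dot; simpl; ring. Qed.
Lemma sqnorm_cis x : sqnorm (cis x) = 1.
Proof. rewrite sqnorm_Cmod, Cmod_cis. ring. Qed.
Lemma sqnorm_RtoC r : sqnorm (RtoC r) = r ^ 2.
Proof. unfold sqnorm, dot; simpl; ring. Qed.
Lemma sqnorm_add x y : sqnorm (x + y)%C = sqnorm x + sqnorm y + 2 * dot x y.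
Proof. destruct x, y; unfold sqnorm, dot; simpl; ring. Qed.
Lemma sumR_dot_l x y n : sumR (fun j => dot (x j) y) n = dot (sumC x n) y.
Proof. unfold dot. rewrite <- sumC_mult_r, fst_sumC. reflexivity. Qed.

Lemma sumC_cis_root_angle_1 N : (1 < N)%nat ->
  sumC (fun j => cis (root_angle N j)) N = RtoC 0.
Proof.
  intros HN. transitivity (if Nat.eq_dec 1 0 then RtoC (INR N) else RtoC 0); [|reflexivity].
  rewrite <- sumC_cis_root_angle by lia. apply sumC_ext. intros. f_equal. simpl. ring.
Qed.

(* Bessel's inequality for two discrete Fourier coefficients. *)
Lemma sumR_sqnorm_ge_coef N (Q : nat -> C) m1 m2 c1 c2 :
  (m1 < N)%nat -> (m2 < N)%nat -> m1 <> m2 ->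
  sumC (fun j => Q j * cis (- (INR m1 * root_angle N j)))%C N = (RtoC (INR N) * c1)%C ->
  sumC (fun j => Q j * cis (- (INR m2 * root_angle N j)))%C N = (RtoC (INR N) * c2)%C ->
  INR N * (sqnorm c1 + sqnorm c2) <= sumR (fun j => sqnorm (Q j)) N.
Proof.
  intros Hm1 Hm2 Hm12 HQ1 HQ2.
  set (A := fun j => (c1 * cis (INR m1 * root_angle N j))%C).
  set (B := fun j => (c2 * cis (INR m2 * root_angle N j))%C).
  assert (Hdot : forall c m j, dot (Q j) (c * cis (INR m * root_angle N j))%C
                   = dot (Q j * cis (- (INR m * root_angle N j)))%C c).
  { intros c m j. unfold dot. rewrite cis_opp. destruct (Q j), c, (cis _). simpl. ring. }
  assert (SQA : sumR (fun j => dot (Q j) (A j)) N = INR N * sqnorm c1).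
  { unfold A. rewrite (sumR_ext _ _ _ (fun j _ => Hdot c1 m1 j)), sumR_dot_l, HQ1.
    unfold sqnorm, dot. destruct c1. simpl. ring. }
  assert (SQB : sumR (fun j => dot (Q j) (B j)) N = INR N * sqnorm c2).
  { unfold B. rewrite (sumR_ext _ _ _ (fun j _ => Hdot c2 m2 j)), sumR_dot_l, HQ2.
    unfold sqnorm, dot. destruct c2. simpl. ring. }
  assert (Hsq : forall c m, sumR (fun j => sqnorm (c * cis (INR m * root_angle N j))%C) N
                  = INR N * sqnorm c).
  { intros c m. rewrite (sumR_ext _ (fun _ => sqnorm c)), sumR_const; auto.
    intros. rewrite sqnorm_mult, sqnorm_cis. ring. }
  assert (SAB : sumR (fun j => dot (A j) (B j)) N = 0).
  { rewrite (sumR_ext _ (fun j => dot (c1 * Cconj c2 * cis ((INR m1 - INR m2) * root_angle N j))%C 1)).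
    - rewrite sumR_dot_l, sumC_mult_l, sumC_cis_root_angle by auto.
      destruct (Nat.eq_dec m1 m2); [contradiction|]. unfold dot. simpl. ring.
    - intros j _. unfold A, B, dot.
      replace ((INR m1 - INR m2) * root_angle N j)
        with (INR m1 * root_angle N j + - (INR m2 * root_angle N j)) by ring.
      rewrite cis_add, cis_opp. destruct c1, c2, (cis (INR m1 * _)), (cis (INR m2 * _)).
      simpl. ring. }
  assert (Hexp : forall j, sqnorm (Q j - A j - B j)%C = sqnorm (Q j) + sqnorm (A j) + sqnorm (B j)
                   - 2 * dot (Q j) (A j) - 2 * dot (Q j) (B j) + 2 * dot (A j) (B j)).
  { intros j. unfold sqnorm, dot. destruct (Q j), (A j), (B j). simpl. ring. }
  pose proof (sumR_nonneg (fun j => sqnorm (Q j - A j - B j)%C) N (fun j _ => sqnorm_nonneg _)).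
  rewrite (sumR_ext _ _ _ (fun j _ => Hexp j)), !sumR_plus, !sumR_minus, !sumR_plus,
    !sumR_mult_l, SQA, SQB, SAB in H.
  unfold A, B in H. rewrite !Hsq in H. lra.
Qed.

Lemma sample_poly_coef_ineq N K (u : nat -> C) (beta : C) r bnd :
  (K < N)%nat -> (3 <= K)%nat -> u 1%nat = RtoC 0 ->
  (forall j, (j < N)%nat -> Cmod (sample_poly N u K j) <= bnd) ->
  sqnorm (u 2%nat) + sqnorm (u 3%nat + beta * RtoC r * u 2%nat)%C
    <= bnd ^ 2 * (1 + sqnorm beta * r ^ 2).
Proof.
  intros HK H3 Hu1 Hb.
  assert (HN : 0 < INR N) by (apply lt_0_INR; lia).
  assert (Hbnd : 0 <= bnd) by (eapply Rle_trans; [apply Cmod_ge_0 | apply (Hb O); lia]).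
  set (P := sample_poly N u K) in *.
  set (Y := fun j => (beta * RtoC r * cis (root_angle N j))%C).
  set (Q := fun j => ((1 + Y j) * P j)%C).
  (* multiplying by [1 + Y] shifts the Fourier coefficient of frequency [m - 1] up to [m] *)
  assert (HQ : forall m, (1 <= m <= K)%nat ->
    sumC (fun j => Q j * cis (- (INR m * root_angle N j)))%C N
      = (RtoC (INR N) * (u m + beta * RtoC r * u (pred m)))%C).
  { intros m Hm.
    rewrite (sumC_ext _ (fun j => P j * cis (- (INR m * root_angle N j))
               + beta * RtoC r * (P j * cis (- (INR (pred m) * root_angle N j))))%C).
    - rewrite sumC_plus, sumC_mult_l. unfold P. rewrite !sample_poly_coef by lia. ring.
    - intros j _. unfold Q, Y.
      replace (- (INR (pred m) * root_angle N j))
        with (root_angle N j + - (INR m * root_angle N j))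
        by (rewrite <- (Nat.succ_pred_pos m), S_INR by lia; simpl; ring).
      rewrite cis_add. ring. }
  pose proof (sumR_sqnorm_ge_coef N Q 2 3 _ _ ltac:(lia) ltac:(lia) ltac:(lia)
                (HQ 2%nat ltac:(lia)) (HQ 3%nat ltac:(lia))) as Hbessel.
  simpl pred in Hbessel. rewrite Hu1, Cmult_0_r, Cplus_0_r in Hbessel.
  assert (SY : sumR (fun j => sqnorm (1 + Y j)%C) N = INR N * (1 + sqnorm beta * r ^ 2)).
  { rewrite (sumR_ext _ (fun j => (1 + sqnorm beta * r ^ 2) + 2 * dot (Y j) (RtoC 1))).
    - rewrite sumR_plus, sumR_mult_l, sumR_const, sumR_dot_l. unfold Y.
      rewrite sumC_mult_l, sumC_cis_root_angle_1 by lia. unfold dot. simpl. ring.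
    - intros j _. rewrite sqnorm_add. unfold Y. rewrite !sqnorm_mult, (sqnorm_RtoC r), sqnorm_cis.
      unfold sqnorm, dot. destruct (beta * RtoC r * cis (root_angle N j))%C. simpl. ring. }
  assert (UP : sumR (fun j => sqnorm (Q j)) N <= bnd ^ 2 * (INR N * (1 + sqnorm beta * r ^ 2))).
  { rewrite <- SY, <- sumR_mult_l. apply sumR_le. intros j Hj. unfold Q. rewrite sqnorm_mult.
    rewrite (sqnorm_Cmod (P j)). pose proof (Hb j Hj). pose proof (Cmod_ge_0 (P j)).
    pose proof (sqnorm_nonneg (1 + Y j)%C).
    rewrite Rmult_comm. apply Rmult_le_compat_r; auto. apply pow_incr. lra. }
  apply (Rmult_le_reg_l (INR N)); auto. nra.
Qed.

(** * Coefficient inequalities for the class Omega *)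

Lemma one_sub_pow_ge e n : 0 <= e <= 1 -> 1 - INR n * e <= (1 - e) ^ n.
Proof.
  intros He. induction n; [simpl; lra|]. rewrite S_INR. simpl pow.
  assert ((1 - e) * (1 - INR n * e) <= (1 - e) * (1 - e) ^ n) by (apply Rmult_le_compat_l; lra).
  pose proof (pos_INR n). nra.
Qed.

Lemma le_div4_of_approx X Y : 0 <= X -> 0 <= Y ->
  (forall r eps, 0 < r < 1 -> eps > 0 -> r ^ 6 * X <= (1 / 2 + eps) ^ 2 * Y) -> X <= Y / 4.
Proof.
  intros HX HY H. destruct (Rle_or_lt X (Y / 4)) as [|Hlt]; auto. exfalso.
  set (d := X - Y / 4).
  set (e := Rmin (1 / 2) (d / (2 * (6 * X + 3 * Y + 1)))).
  assert (He0 : 0 < e) by (unfold e; apply Rmin_pos; [lra | apply Rdiv_lt_0_compat; unfold d; lra]).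
  assert (He1 : e <= 1 / 2) by apply Rmin_l.
  assert (He3 : e * (6 * X + 3 * Y + 1) <= d / 2).
  { apply Rle_trans with (d / (2 * (6 * X + 3 * Y + 1)) * (6 * X + 3 * Y + 1)).
    - apply Rmult_le_compat_r; [lra | apply Rmin_r].
    - right. field. lra. }
  specialize (H (1 - e) e ltac:(lra) He0).
  pose proof (one_sub_pow_ge e 6 ltac:(lra)). simpl INR in H0.
  assert ((1 - 6 * e) * X <= (1 - e) ^ 6 * X) by (apply Rmult_le_compat_r; lra).
  assert ((1 / 2 + e) ^ 2 * Y <= (1 / 4 + 2 * e) * Y) by (apply Rmult_le_compat_r; nra).
  unfold d in *. nra.
Qed.

(* Bessel's inequality for the samples of [(1 + beta r w) (w g'(w) - g(w))] at the [N]-th roots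
   of unity on the circle [|w| = r], followed by [r -> 1]. *)
Lemma euler_bound_coef_ineq g b : has_taylor g b ->
  (forall w, Cmod w < 1 -> exists L, is_Cderiv g w L /\ Cmod (w * L - g w)%C < 1 / 2) ->
  forall beta, sqnorm (b 2%nat) + sqnorm (RtoC 2 * b 3%nat + beta * b 2%nat)%C
                 <= (1 + sqnorm beta) / 4.
Proof.
  intros Hg Hom beta.
  pose proof (sqnorm_nonneg (b 2%nat)); pose proof (sqnorm_nonneg beta).
  pose proof (sqnorm_nonneg (RtoC 2 * b 3%nat + beta * b 2%nat)%C).
  apply le_div4_of_approx; try lra. intros r eps Hr He.
  destruct (tpoly_euler_approx g b r eps Hg Hr He) as [K [HK Happ]].
  set (N := (K + 4)%nat).
  set (u := fun n => (RtoC (INR n - 1) * b n * RtoC (r ^ n))%C).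
  assert (Hb : forall j, (j < N)%nat -> Cmod (sample_poly N u K j) <= 1 / 2 + eps).
  { intros j Hj. set (z := (RtoC r * cis (root_angle N j))%C).
    assert (Hz : Cmod z = r) by (unfold z; rewrite Cmod_mult, Cmod_cis, Cmod_RtoC_nonneg; lra).
    replace (sample_poly N u K j) with (tpoly_euler b K z).
    2: { unfold sample_poly, tpoly_euler. apply sumC_ext. intros n _. unfold z, u.
         rewrite Cpow_mult_l, cis_pow, RtoC_pow. ring. }
    destruct (Hom z ltac:(lra)) as [L [HL HzL]]. specialize (Happ z L Hz HL).
    replace (tpoly_euler b K z) with ((z * L - g z) + - (z * L - g z - tpoly_euler b K z))%C by ring.
    eapply Rle_trans; [apply Cmod_triangle|]. rewrite Cmod_opp. lra. }
  pose proof (sample_poly_coef_ineq N K u beta r (1 / 2 + eps) ltac:(unfold N; lia) HK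
                ltac:(unfold u; apply injective_projections; simpl; ring) Hb) as D.
  replace (u 2%nat) with (RtoC (r ^ 2) * b 2%nat)%C in D
    by (unfold u; apply injective_projections; simpl; ring).
  replace (u 3%nat + beta * RtoC r * (RtoC (r ^ 2) * b 2%nat))%C
    with (RtoC (r ^ 3) * (RtoC 2 * b 3%nat + beta * b 2%nat))%C in D
    by (unfold u; apply injective_projections; simpl; ring).
  rewrite !sqnorm_mult, !sqnorm_RtoC in D.
  assert (r ^ 2 <= 1) by nra. pose proof (pow2_ge_0 (r ^ 2)).
  assert (r ^ 6 <= (r ^ 2) ^ 2) by (replace (r ^ 6) with ((r ^ 2) ^ 2 * r ^ 2) by ring; nra).
  assert ((1 / 2 + eps) ^ 2 * (1 + sqnorm beta * r ^ 2) <= (1 / 2 + eps) ^ 2 * (1 + sqnorm beta))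
    by (apply Rmult_le_compat_l; nra).
  replace ((r ^ 3) ^ 2) with (r ^ 6) in D by ring. nra.
Qed.

Lemma coef_bound_of_forall_beta (b2 b3 : C) :
  (forall beta, sqnorm b2 + sqnorm (RtoC 2 * b3 + beta * b2)%C <= (1 + sqnorm beta) / 4) ->
  sqnorm b2 <= 1 / 4 /\ Cmod b3 <= 1 / 4 - sqnorm b2.
Proof.
  intros H. set (s := sqnorm b2). set (A := sqnorm b3).
  assert (Hs : 0 <= s) by apply sqnorm_nonneg. assert (HA : 0 <= A) by apply sqnorm_nonneg.
  assert (H0 : s + 4 * A <= 1 / 4).
  { specialize (H (RtoC 0)). replace (sqnorm (RtoC 2 * b3 + RtoC 0 * b2)%C) with (4 * A) in H
      by (unfold A; destruct b2, b3; unfold sqnorm, dot; simpl; ring).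
    rewrite sqnorm_RtoC, pow_i in H by lia. change (sqnorm b2) with s in H. lra. }
  split; [lra|].
  assert (HC : Cmod b3 ^ 2 = A) by (unfold A; rewrite sqnorm_Cmod; reflexivity).
  pose proof (Cmod_ge_0 b3).
  destruct (Req_dec s (1 / 4)) as [Eq|Ne]; [assert (Cmod b3 = 0) by nra; lra|].
  set (D := 1 - 4 * s). assert (HD : 0 < D) by (unfold D; lra).
  (* the optimal [beta = 8 b3 conj(b2) / (1 - 4 |b2|^2)] *)
  set (lam := 4 / D).
  specialize (H (RtoC lam * (RtoC 2 * b3 * Cconj b2))%C).
  replace (sqnorm (RtoC 2 * b3 + RtoC lam * (RtoC 2 * b3 * Cconj b2) * b2)%C)
    with (4 * A * (1 + lam * s) ^ 2) in H
    by (unfold A, s; destruct b2, b3; unfold sqnorm, dot; simpl; ring).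
  replace (sqnorm (RtoC lam * (RtoC 2 * b3 * Cconj b2))%C) with (4 * lam ^ 2 * A * s) in H
    by (unfold A, s; destruct b2, b3; unfold sqnorm, dot; simpl; ring).
  change (sqnorm b2) with s in H.
  assert (Hl : lam * D = 4) by (unfold lam; field; lra).
  assert (Hmu : (1 + lam * s) * D = 1) by (unfold D in *; nra).
  assert (H' : (s + 4 * A * (1 + lam * s) ^ 2) * D ^ 2 <= (1 + 4 * lam ^ 2 * A * s) / 4 * D ^ 2)
    by (apply Rmult_le_compat_r; nra).
  replace ((s + 4 * A * (1 + lam * s) ^ 2) * D ^ 2) with (s * D ^ 2 + 4 * A * ((1 + lam * s) * D) ^ 2)
    in H' by ring.
  replace ((1 + 4 * lam ^ 2 * A * s) / 4 * D ^ 2) with (D ^ 2 / 4 + A * s * (lam * D) ^ 2)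
    in H' by (field; lra).
  rewrite Hmu, Hl in H'.
  assert (A * D <= D ^ 3 / 16) by (unfold D in *; nra).
  assert (A <= (D / 4) ^ 2).
  { apply (Rmult_le_reg_r D); auto. replace ((D / 4) ^ 2 * D) with (D ^ 3 / 16) by field. lra. }
  assert (Cmod b3 <= D / 4) by nra. unfold D in *. lra.
Qed.

Lemma Cmod_sub_mul_sq_le (b2 b3 t : C) : sqnorm b2 <= 1 / 4 -> Cmod b3 <= 1 / 4 - sqnorm b2 ->
  Cmod (b3 - t * (b2 * b2))%C <= Rmax 1 (Cmod t) / 4.
Proof.
  intros H2 H3.
  replace (b3 - t * (b2 * b2))%C with (b3 + - (t * (b2 * b2)))%C by ring.
  eapply Rle_trans; [apply Cmod_triangle|].
  rewrite Cmod_opp, !Cmod_mult.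
  replace (Cmod b2 * Cmod b2) with (sqnorm b2) by (rewrite sqnorm_Cmod; ring).
  pose proof (Rmax_l 1 (Cmod t)). pose proof (Rmax_r 1 (Cmod t)).
  pose proof (sqnorm_nonneg b2). pose proof (Cmod_ge_0 t). nra.
Qed.

(** * Extremal polynomials *)

Definition cubic (c : nat -> C) (w : C) : C := sumC (fun n => c n * w ^ n)%C 4.

Lemma has_taylor_cubic c : (forall n, (4 <= n)%nat -> c n = RtoC 0) -> has_taylor (cubic c) c.
Proof.
  intros Hc w _.
  assert (E : forall N, (3 <= N)%nat -> sumC (fun n => c n * w ^ n)%C (S N) = cubic c w).
  { intros N HN. replace (S N) with (4 + (N - 3))%nat by lia. rewrite sumC_split.
    rewrite (sumC_ext (fun i => c (4 + i)%nat * w ^ (4 + i))%C (fun _ => RtoC 0)).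
    - rewrite sumC_const. unfold cubic. ring.
    - intros i _. rewrite Hc by lia. ring. }
  split; intros eps He; exists 3%nat; intros N HN; unfold R_dist;
    rewrite E by lia; rewrite Rminus_diag, Rabs_R0; lra.
Qed.

Lemma is_Cderiv_of_linear_remainder g w L M : 0 <= M ->
  (forall h, 0 < Cmod h <= 1 -> Cmod ((g (w + h) - g w) / h - L)%C <= M * Cmod h) ->
  is_Cderiv g w L.
Proof.
  intros HM Hrem eps He. exists (Rmin 1 (eps / (M + 1))).
  split; [apply Rmin_pos; [lra | apply Rdiv_lt_0_compat; lra]|].
  intros h [Hh0 Hh]. pose proof (Rmin_l 1 (eps / (M + 1))). pose proof (Rmin_r 1 (eps / (M + 1))).
  eapply Rle_lt_trans; [apply Hrem; lra|].
  apply Rle_lt_trans with (M * (eps / (M + 1))); [apply Rmult_le_compat_l; lra|].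
  apply (Rmult_lt_reg_r (M + 1)); [lra|]. field_simplify; nra.
Qed.

Definition extremal_cubic (n : nat) : C :=
  match n with 1 => RtoC 1 | 3 => RtoC (1 / 4) | _ => RtoC 0 end.
Definition extremal_quadratic (n : nat) : C :=
  match n with 1 => RtoC 1 | 2 => RtoC (1 / 2) | _ => RtoC 0 end.

Lemma extremal_cubic_euler_bound w : Cmod w < 1 ->
  exists L, is_Cderiv (cubic extremal_cubic) w L /\
    Cmod (w * L - cubic extremal_cubic w)%C < 1 / 2.
Proof.
  intros Hw. pose proof (Cmod_ge_0 w). exists (1 + RtoC (3 / 4) * w ^ 2)%C. split.
  - apply (is_Cderiv_of_linear_remainder _ _ _ 1); [lra|]. intros h [Hh0 Hh].
    assert (Hh' : h <> RtoC 0) by (intros E; rewrite E, Cmod_0 in Hh0; lra).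
    replace ((cubic extremal_cubic (w + h) - cubic extremal_cubic w) / h
               - (1 + RtoC (3 / 4) * w ^ 2))%C
      with (RtoC (1 / 4) * h * (RtoC 3 * w + h))%C.
    2: { unfold cubic. simpl. rewrite !RtoC_div by lra. field. auto. }
    rewrite !Cmod_mult, Cmod_RtoC_nonneg by lra.
    pose proof (Cmod_triangle (RtoC 3 * w) h). rewrite Cmod_mult, Cmod_RtoC_nonneg in H0 by lra.
    pose proof (Cmod_ge_0 (RtoC 3 * w + h)%C). nra.
  - replace (w * (1 + RtoC (3 / 4) * w ^ 2) - cubic extremal_cubic w)%C
      with (RtoC (1 / 2) * w ^ 3)%C
      by (unfold cubic; apply injective_projections; simpl; field).
    rewrite Cmod_mult, Cmod_RtoC_nonneg, Cmod_pow by lra.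
    assert (Cmod w ^ 3 < 1) by (simpl; nra). lra.
Qed.

Lemma extremal_quadratic_euler_bound w : Cmod w < 1 ->
  exists L, is_Cderiv (cubic extremal_quadratic) w L /\
    Cmod (w * L - cubic extremal_quadratic w)%C < 1 / 2.
Proof.
  intros Hw. pose proof (Cmod_ge_0 w). exists (1 + w)%C. split.
  - apply (is_Cderiv_of_linear_remainder _ _ _ (1 / 2)); [lra|]. intros h [Hh0 Hh].
    assert (Hh' : h <> RtoC 0) by (intros E; rewrite E, Cmod_0 in Hh0; lra).
    replace ((cubic extremal_quadratic (w + h) - cubic extremal_quadratic w) / h - (1 + w))%C
      with (RtoC (1 / 2) * h)%C.
    2: { unfold cubic. simpl. rewrite !RtoC_div by lra. field. auto. }
    rewrite Cmod_mult, Cmod_RtoC_nonneg by lra. lra.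
  - replace (w * (1 + w) - cubic extremal_quadratic w)%C with (RtoC (1 / 2) * w ^ 2)%C
      by (unfold cubic; apply injective_projections; simpl; field).
    rewrite Cmod_mult, Cmod_RtoC_nonneg, Cmod_pow by lra.
    assert (Cmod w ^ 2 < 1) by (simpl; nra). lra.
Qed.

(** * Transfer to the coefficient functional *)

Definition toC (z : Defs.Cx) : C := (Defs.Re z, Defs.Im z).
Definition fromC (w : C) : Defs.Cx := Defs.mkC (fst w) (snd w).

Lemma toC_fromC w : toC (fromC w) = w.
Proof. destruct w; reflexivity. Qed.
Lemma Cmod_toC z : Defs.Cmod z = Cmod (toC z).
Proof. reflexivity. Qed.
Lemma toC_pow z n : toC (Defs.Cpow z n) = (toC z ^ n)%C.
Proof. induction n; simpl; [reflexivity|]. rewrite <- IHn. reflexivity. Qed.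
Lemma toC_Csum u N : toC (Defs.Csum u N) = sumC (fun n => toC (u n)) (S N).
Proof.
  induction N; [apply injective_projections; simpl; ring|].
  change (toC (Defs.Csum u (S N))) with (toC (Defs.Csum u N) + toC (u (S N)))%C.
  rewrite IHN. reflexivity.
Qed.

Lemma has_taylor_of_in_A f a : Defs.in_A f a ->
  has_taylor (fun w => toC (f (fromC w))) (fun n => toC (a n)).
Proof.
  intros [Ha _] w Hw. destruct (Ha (fromC w)) as [H1 H2]; [rewrite Cmod_toC, toC_fromC; auto|].
  assert (E : forall N, toC (Defs.Csum (fun n => Defs.Cmul (a n) (Defs.Cpow (fromC w) n)) N)
                        = sumC (fun n => toC (a n) * w ^ n)%C (S N)).
  { intros N. rewrite toC_Csum. apply sumC_ext. intros.
    change (toC (Defs.Cmul ?x ?y)) with (toC x * toC y)%C. rewrite toC_pow, toC_fromC. reflexivity. }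
  split; (eapply Un_cv_ext; [| eassumption]); intros N; rewrite <- E; reflexivity.
Qed.

Lemma euler_bound_of_in_Omega f a : Defs.in_Omega f a ->
  forall w, Cmod w < 1 -> exists L, is_Cderiv (fun w => toC (f (fromC w))) w L /\
    Cmod (w * L - toC (f (fromC w)))%C < 1 / 2.
Proof.
  intros [_ Ho] w Hw. destruct (Ho (fromC w)) as [L [HL HwL]]; [rewrite Cmod_toC, toC_fromC; auto|].
  exists (toC L). split; [|exact HwL].
  intros eps He. destruct (HL eps He) as [d [Hd Hdd]]. exists d. split; auto.
  intros h Hh. specialize (Hdd (fromC h)). rewrite Cmod_toC, toC_fromC in Hdd. exact (Hdd Hh).
Qed.

Lemma in_Omega_cubic c : c 0%nat = RtoC 0 -> c 1%nat = RtoC 1 ->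
  (forall n, (4 <= n)%nat -> c n = RtoC 0) ->
  (forall w, Cmod w < 1 -> exists L, is_Cderiv (cubic c) w L /\ Cmod (w * L - cubic c w)%C < 1 / 2) ->
  Defs.in_Omega (fun z => fromC (cubic c (toC z))) (fun n => fromC (c n)).
Proof.
  intros H0 H1 Hc Hom. split; [split; [|split]|].
  - intros z Hz. rewrite Cmod_toC in Hz. destruct (has_taylor_cubic c Hc (toC z) Hz) as [E1 E2].
    assert (E : forall N, toC (Defs.Csum (fun n => Defs.Cmul (fromC (c n)) (Defs.Cpow z n)) N)
                          = sumC (fun n => c n * toC z ^ n)%C (S N)).
    { intros N. rewrite toC_Csum. apply sumC_ext. intros.
      change (toC (Defs.Cmul ?x ?y)) with (toC x * toC y)%C. rewrite toC_pow, toC_fromC.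
      reflexivity. }
    split; (eapply Un_cv_ext; [| eassumption]); intros N; cbv beta; rewrite <- E; reflexivity.
  - rewrite H0. reflexivity.
  - rewrite H1. reflexivity.
  - intros z Hz. rewrite Cmod_toC in Hz. destruct (Hom (toC z) Hz) as [L [HL HzL]].
    exists (fromC L). split; [|rewrite Cmod_toC; exact HzL].
    intros eps He. destruct (HL eps He) as [d [Hd Hdd]]. exists d. split; auto.
    intros h Hh. rewrite Cmod_toC in Hh. exact (Hdd (toC h) Hh).
Qed.

Definition FS_factor (k : nat) (mu : C) : C :=
  (RtoC (1 / (2 * INR k)) * (RtoC 2 * mu + RtoC (INR k - 1)))%C.

Lemma FS_toC k a mu : (1 <= k)%nat ->
  toC (Defs.FS k a mu)
    = (RtoC (1 / INR k) * (toC (a 3%nat) - FS_factor k (toC mu) * (toC (a 2%nat) * toC (a 2%nat))))%C.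
Proof.
  intros Hk. assert (INR k <> 0) by (apply not_0_INR; lia).
  unfold Defs.FS, Defs.b_2k1, Defs.b_k1, FS_factor, toC.
  destruct (a 2%nat), (a 3%nat), mu. apply injective_projections; simpl; field; auto.
Qed.

Lemma FS_bound_toC k mu : Defs.FS_bound k mu = 1 / (4 * INR k) * Rmax 1 (Cmod (FS_factor k (toC mu))).
Proof. reflexivity. Qed.

Lemma FS_le_FS_bound k mu f a : (1 <= k)%nat -> Defs.in_Omega f a ->
  Defs.Cmod (Defs.FS k a mu) <= Defs.FS_bound k mu.
Proof.
  intros Hk Hf. assert (HkR : 0 < INR k) by (apply lt_0_INR; lia).
  pose proof (euler_bound_coef_ineq _ _ (has_taylor_of_in_A f a (proj1 Hf))
                (euler_bound_of_in_Omega f a Hf)) as Hbeta.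
  destruct (coef_bound_of_forall_beta _ _ Hbeta) as [H2 H3].
  pose proof (Cmod_sub_mul_sq_le _ _ (FS_factor k (toC mu)) H2 H3).
  rewrite Cmod_toC, FS_toC, FS_bound_toC, Cmod_mult, Cmod_RtoC_nonneg by (auto; apply Rlt_le, Rdiv_lt_0_compat; lra).
  replace (1 / (4 * INR k)) with (1 / INR k * / 4) by (field; lra).
  rewrite Rmult_assoc. apply Rmult_le_compat_l; [apply Rlt_le, Rdiv_lt_0_compat|]; lra.
Qed.

Lemma FS_bound_attained k mu : (1 <= k)%nat ->
  exists f a, Defs.in_Omega f a /\ Defs.Cmod (Defs.FS k a mu) = Defs.FS_bound k mu.
Proof.
  intros Hk. assert (HkR : 0 < INR k) by (apply lt_0_INR; lia).
  destruct (Rle_or_lt (Cmod (FS_factor k (toC mu))) 1) as [Ht|Ht].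
  - exists (fun z => fromC (cubic extremal_cubic (toC z))), (fun n => fromC (extremal_cubic n)).
    split.
    + apply in_Omega_cubic; try reflexivity; [|apply extremal_cubic_euler_bound].
      intros [|[|[|[|n]]]] Hn; try lia; reflexivity.
    + rewrite Cmod_toC, FS_toC, FS_bound_toC, !toC_fromC, Rmax_left by auto.
      set (t := FS_factor k (toC mu)). simpl.
      replace (RtoC (1 / 4) - t * (RtoC 0 * RtoC 0))%C with (RtoC (1 / 4)) by ring.
      rewrite <- RtoC_mult, Cmod_RtoC_nonneg; [field; lra|].
      apply Rmult_le_pos; apply Rlt_le, Rdiv_lt_0_compat; lra.
  - exists (fun z => fromC (cubic extremal_quadratic (toC z))), (fun n => fromC (extremal_quadratic n)).
    split.
    + apply in_Omega_cubic; try reflexivity; [|apply extremal_quadratic_euler_bound].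
      intros [|[|[|[|n]]]] Hn; try lia; reflexivity.
    + rewrite Cmod_toC, FS_toC, FS_bound_toC, !toC_fromC, Rmax_right by (auto || lra).
      set (t := FS_factor k (toC mu)). simpl.
      replace (RtoC 0 - t * (RtoC (1 / 2) * RtoC (1 / 2)))%C with (- (RtoC (1 / 4) * t))%C
        by (clearbody t; destruct t; apply injective_projections; simpl; field).
      rewrite Cmod_mult, Cmod_opp, Cmod_mult, !Cmod_RtoC_nonneg; [field| |]; try lra.
      apply Rlt_le, Rdiv_lt_0_compat; lra.
Qed.

Import Defs.

Theorem theorem6p1 (k : nat) (hk : (1 <= k)%nat) (mu : Cx) :
  (forall (f : Cx -> Cx) (a : nat -> Cx), in_Omega f a ->
     Cmod (FS k a mu) <= FS_bound k mu) /\
  (exists (f : Cx -> Cx) (a : nat -> Cx), in_Omega f a /\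
     Cmod (FS k a mu) = FS_bound k mu).
Proof.
  split.
  - intros f a Hf. exact (FS_le_FS_bound k mu f a hk Hf).
  - exact (FS_bound_attained k mu hk).
Qed.
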